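(* If $Y^*\in\mathcal L^1(\mathcal Q)$ and $\rho_{\mathcal Q}$ is continuous from above at $0$, then (i) $\sup_{\tau\in\mathcal T}\inf_{\mathrm Q\in\overline{\mathcal Q}}\mathbb E_{\mathrm Q}[Y_\tau]=\sup_{\tau\in\mathcal T_f}\inf_{\mathrm Q\in\overline{\mathcal Q}}\mathbb E_{\mathrm Q}[Y_\tau]$; (ii) $\inf_{\mathrm Q\in\overline{\mathcal Q}}\sup_{\tau\in\mathcal T}\mathbb E_{\mathrm Q}[Y_\tau]=\inf_{\mathrm Q\in\overline{\mathcal Q}}\sup_{\tau\in\mathcal T_f}\mathbb E_{\mathrm Q}[Y_\tau]$.
   Context: Let $(\Omega,\mathcal F,(\mathcal F_t)_{0\le t\le T},\mathrm P)$ be a filtered probability space ($0<T<\infty$) with right-continuous filtration, $\mathcal F=\mathcal F_T$, $\mathcal F_0$ trivial and containing all $\mathrm P$-null sets. $\mathcal T$ is the set of stopping times $\tau\le T$ and $\mathcal T_f$ the set of those with finite range. $\mathcal Q$ is a nonempty set of probability measures on $\mathcal F$, each absolutely continuous w.r.t. $\mathrm P$. $\mathcal L^1(\mathcal Q)$ is the set of random variables $X$ with $\sup_{\mathrm Q\in\mathcal Q}\mathbb E_{\mathrm Q}[|X|]<\infty$. $Y=(Y_t)_{0\le t\le T}$ is a right-continuous adapted process with bounded paths, quasi left-uppersemicontinuous w.r.t. $\mathrm P$, and $Y^*:=\sup_{t\in[0,T]}|Y_t|$. $\mathcal X$ is the set of random variables $X$ with $|X|\le C(Y^*+1)$ $\mathrm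 P$-a.s. for some $C>0$; $\rho_{\mathcal Q}(X)=\sup_{\mathrm Q\in\mathcal Q}\mathbb E_{\mathrm Q}[X]$ for $X\in\mathcal X$; $\rho_{\mathcal Q}$ is continuous from above at $0$ if $\rho_{\mathcal Q}(X_n)\searrow0$ whenever $X_n\in\mathcal X$, $X_n\searrow0$ $\mathrm P$-a.s. $\overline{\mathcal Q}$ is the set of probability measures $\mathrm Q$ on $\mathcal F$ such that every $X\in\mathcal X$ is $\mathrm Q$-integrable and $\mathbb E_{\mathrm Q}[X]\le\rho_{\mathcal Q}(X)$ for all $X\in\mathcal X$. *)

From HB Require Import structures.
From mathcomp Require Import all_boot all_order all_algebra.
From mathcomp Require Import all_classical all_reals all_analysis.

Set Implicit Arguments.
Unset Strict Implicit.
Unset Printing Implicit Defensive.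

Import Order.TTheory GRing.Theory Num.Theory numFieldNormedType.Exports.
Local Open Scope classical_set_scope.
Local Open Scope ring_scope.

Section defs.
Context {d : measure_display} {T : measurableType d} {R : realType}.

(** Time horizon [0, Tend]; the filtration is a map F : R -> set (set T),
    only its values on [0, Tend] matter. *)

Definition filtration (P : probability T R) (Tend : R)
    (F : R -> set (set T)) : Prop :=
  [/\ (forall t, 0 <= t <= Tend -> sigma_algebra setT (F t)),
      (forall s t, 0 <= s -> s <= t -> t <= Tend -> F s `<=` F t),
      F Tend = measurable &
      (forall t, 0 <= t < Tend -> forall A,
          (forall s, t < s <= Tend -> F s A) -> F t A)] /\
  [/\ (forall A, F 0 A -> P A = 0%E \/ P A = 1%E) &
      (forall A, measurable A -> P A = 0%E -> F 0 A)].

Definition stopping_time (Tend : R) (F : R -> set (set T)) (tau : T -> R)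
    : Prop :=
  (forall w, 0 <= tau w <= Tend) /\
  (forall t, 0 <= t <= Tend -> F t [set w | tau w <= t]).

Definition finite_stopping_time (Tend : R) (F : R -> set (set T))
    (tau : T -> R) : Prop :=
  stopping_time Tend F tau /\ finite_set (range tau).

Definition adapted (Tend : R) (F : R -> set (set T)) (Y : R -> T -> R) :=
  forall t, 0 <= t <= Tend ->
    forall B : set R, measurable B -> F t (Y t @^-1` B).

Definition right_continuous_paths (Tend : R) (Y : R -> T -> R) :=
  forall (w : T) (t : R), 0 <= t < Tend ->
    (fun s : R => Y s w) @ at_right t --> Y t w.

Definition bounded_paths (Tend : R) (Y : R -> T -> R) :=
  forall w, exists M : R, forall t, 0 <= t <= Tend -> `|Y t w| <= M.

Definition quasi_left_usc (P : probability T R) (Tend : R)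
    (F : R -> set (set T)) (Y : R -> T -> R) :=
  forall (taun : nat -> T -> R) (tau : T -> R),
    (forall n, stopping_time Tend F (taun n)) -> stopping_time Tend F tau ->
    (forall w, nondecreasing_seq (fun n => taun n w)) ->
    (forall w, (fun n => taun n w) @ \oo --> tau w) ->
    {ae P, forall w,
       (limn_esup (fun n => (Y (taun n w) w)%:E) <= (Y (tau w) w)%:E)%E}.

Definition Ystar (Tend : R) (Y : R -> T -> R) (w : T) : R :=
  sup [set `|Y t w| | t in [set t | 0 <= t <= Tend]].

Definition expect (Q : probability T R) (X : T -> R) : \bar R :=
  (\int[Q]_w (X w)%:E)%E.

Definition L1Q (Qs : set (probability T R)) (X : T -> R) : Prop :=
  (ereal_sup [set expect Q (fun w => (`|X w|)%R) | Q in Qs] < +oo)%E.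

Definition calX (P : probability T R) (Tend : R) (Y : R -> T -> R)
    (X : T -> R) : Prop :=
  measurable_fun setT X /\
  exists C : R, 0 < C /\ {ae P, forall w, `|X w| <= C * (Ystar Tend Y w + 1)}.

Definition rhoQ (Qs : set (probability T R)) (X : T -> R) : \bar R :=
  ereal_sup [set expect Q X | Q in Qs].

Definition cont_from_above_at0 (P : probability T R) (Qs : set (probability T R))
    (Tend : R) (Y : R -> T -> R) : Prop :=
  forall Xn : nat -> T -> R,
    (forall n, calX P Tend Y (Xn n)) ->
    {ae P, forall w, nonincreasing_seq (fun n => Xn n w) /\
                     (fun n => Xn n w) @ \oo --> (0 : R)} ->
    (fun n => rhoQ Qs (Xn n)) @ \oo --> 0%E.

Definition Qbar (P : probability T R) (Qs : set (probability T R))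
    (Tend : R) (Y : R -> T -> R) : set (probability T R) :=
  [set Q : probability T R | forall X, calX P Tend Y X ->
             Q.-integrable setT (EFin \o X) /\ (expect Q X <= rhoQ Qs X)%E].

End defs.

From HB Require Import structures.
From mathcomp Require Import all_boot all_order all_algebra.
From mathcomp Require Import all_classical all_reals all_analysis.
From mathcomp Require Import measurable_realfun lra.
Import Order.TTheory GRing.Theory Num.Theory numFieldNormedType.Exports.
Set Implicit Arguments.
Unset Strict Implicit.
Unset Printing Implicit Defensive.
Local Open Scope classical_set_scope.
Local Open Scope ring_scope.

(* Every stopping time tau is approximated from above by the finite-valued
   stopping times tau_m := ceil_step (Tend/(m+1)) tau, so Y_(tau_m) -> Y_tau
   pointwise by right-continuity of the paths, and
   |Y_tau - Y_(tau_m)| <= 2 Y^*.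
   The envelopes Z_n := sup_(m >= n) |Y_tau - Y_(tau_m)| lie in the domain of
   rho and decrease to 0, so continuity from above yields rho(Z_n) <= e for
   some n, and then E_Q[Y_tau] <= E_Q[Y_(tau_n)] + rho(Z_n) for every Q in
   Qbar.  This approximation of tau by a finite-valued stopping time is
   uniform in Q, so it transfers to both the sup-inf and the inf-sup. *)

Section sup_inf_approximation.
Local Open Scope ereal_scope.
Variables (R : realType) (I J : Type) (f : I -> J -> \bar R).
Variables (Is : set I) (A B : set J).
Hypothesis BA : B `<=` A.
Hypothesis approx : forall j (e : R), A j -> (0 < e)%R ->
  exists2 k, B k & forall i, Is i -> f i j <= f i k + e%:E.

Lemma ereal_sup_inf_approx :
  ereal_sup [set ereal_inf [set f i j | i in Is] | j in A] =
  ereal_sup [set ereal_inf [set f i j | i in Is] | j in B].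
Proof.
apply/eqP; rewrite eq_le; apply/andP; split; last first.
  by apply: ereal_sup_le => _ [j Bj <-]; exists j => //; exact: BA.
apply: ge_ereal_sup => _ [j Aj <-]; apply/lee_addgt0Pr => e e0.
have [k Bk fjk] := approx Aj e0.
apply: (@le_trans _ _ (ereal_inf [set f i k | i in Is] + e%:E)).
  rewrite -leeBlDr //; apply: le_ereal_inf_tmp => _ [i Ii <-].
  rewrite leeBlDr //; apply: le_trans (fjk i Ii).
  by apply: ereal_inf_lbound; exists i.
by apply: leeD2r; apply: ereal_sup_ubound; exists k.
Qed.

Lemma ereal_inf_sup_approx :
  ereal_inf [set ereal_sup [set f i j | j in A] | i in Is] =
  ereal_inf [set ereal_sup [set f i j | j in B] | i in Is].
Proof.
apply/eqP; rewrite eq_le; apply/andP; split;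
  apply: le_ereal_inf_tmp => _ [i Ii <-];
  (apply: le_trans; first by apply: ereal_inf_lbound; exists i).
  apply: ge_ereal_sup => _ [j Aj <-]; apply/lee_addgt0Pr => e e0.
  have [k Bk fjk] := approx Aj e0.
  apply: le_trans (fjk i Ii) _; apply: leeD2r.
  by apply: ereal_sup_ubound; exists k.
by apply: ereal_sup_le => _ [j Bj <-]; exists j => //; exact: BA.
Qed.

End sup_inf_approximation.

Section ceil_step.
Variables (R : realType) (a : R).
Hypothesis a_gt0 : 0 < a.

Definition ceil_step (x : R) : R := a * (Num.ceil (x / a))%:~R.

Lemma ceil_step_ge x : x <= ceil_step x.
Proof. by rewrite /ceil_step mulrC -ler_pdivrMr // ceil_ge. Qed.

Lemma ceil_step_lt x : ceil_step x < x + a.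
Proof.
have := ceilB1_lt (x / a); rewrite intrB ltrBlDr -(ltr_pM2l a_gt0) mulrDr mulr1.
by rewrite mulrCA divff ?gt_eqF // mulr1.
Qed.

Lemma ceil_step_le_int x (k : int) :
  (ceil_step x <= a * k%:~R) = (x <= a * k%:~R).
Proof.
by rewrite /ceil_step ler_pM2l // ler_int ceil_le_int ler_pdivrMr // mulrC.
Qed.

Lemma ceil_step_le x t :
  (ceil_step x <= t) = (x <= a * (Num.floor (t / a))%:~R).
Proof.
by rewrite -ceil_step_le_int /ceil_step ler_pM2l // ler_int floor_ge_int
  ler_pdivlMr // mulrC.
Qed.

Lemma ceil_step_mem x (n : nat) : 0 <= x <= a * n%:R ->
  exists2 k : nat, (k < n.+1)%N & ceil_step x = a * k%:R.
Proof.
move=> /andP[x0 xn]; have c0 : 0 <= Num.ceil (x / a).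
  by rewrite ceil_ge0 (lt_le_trans (ltrN10 R)) // divr_ge0 // ltW.
have := ceil_step_le_int x n; rewrite xn /ceil_step ler_pM2l // ler_int.
by case: (Num.ceil (x / a)) c0 => // k _ kn; exists k.
Qed.

End ceil_step.

Lemma cvg_at_right_seq (R : realType) (V : topologicalType) (f : R -> V)
    (t : R) (s : nat -> R) :
  f @ at_right t --> f t -> (forall n, t <= s n) -> s @ \oo --> t ->
  f \o s @ \oo --> f t.
Proof.
move=> ft ts st U fU; have := ft _ fU.
rewrite /at_right /within /= => /nbhs_ballP[r r0 hr].
apply: filterS (cvgr_dist_lt _ _ st _ r0) => n /= tsr.
have [<-|tn] := eqVneq t (s n); first exact: nbhs_singleton.
by apply: hr; [rewrite -ball_normE | rewrite lt_neqAle tn ts].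
Qed.

Section stopping_times.
Variables (d : measure_display) (T : measurableType d) (R : realType).
Variables (P : probability T R) (Tend : R) (F : R -> set (set T)).
Hypothesis F_filtration : filtration P Tend F.

Lemma filtration_measurable t : 0 <= t <= Tend -> F t `<=` measurable.
Proof.
have [[_ F_mono F_Tend _] _] := F_filtration.
by move=> /andP[t0 tT]; rewrite -F_Tend; exact: F_mono.
Qed.

Lemma adapted_measurable (Y : R -> T -> R) t :
  adapted Tend F Y -> 0 <= t <= Tend -> measurable_fun setT (Y t).
Proof.
move=> Y_adapted tT _ B mB; rewrite setTI.
exact: filtration_measurable tT _ (Y_adapted t tT B mB).
Qed.

Lemma stopping_time_measurable tau :
  stopping_time Tend F tau -> measurable_fun setT tau.
Proof.
move=> [tau_b tau_F].
apply: (measurability _ (RGenOInfty.measurableE R)) => //.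
move=> _ [_ [x ->] <-].
have -> : setT `&` tau @^-1` `]x, +oo[ = ~` [set w | tau w <= x].
  apply/seteqP; split => w /=; rewrite in_itv /= andbT.
    by move=> [_ xw]; apply/negP; rewrite -ltNge.
  by move/negP; rewrite -ltNge.
apply: measurableC; have [x0|x0] := ltP x 0.
  suff -> : [set w | tau w <= x] = set0 by [].
  apply/seteqP; split => w //= wx.
  by have /andP[+ _] := tau_b w; rewrite leNgt (le_lt_trans wx x0).
have [xT|Tx] := leP x Tend.
  apply: (filtration_measurable (t := x)); first by rewrite x0.
  by apply: tau_F; rewrite x0.
suff -> : [set w | tau w <= x] = setT by [].
apply/seteqP; split => w //= _.
by have /andP[_ /le_trans->] := tau_b w; rewrite ?ltW.
Qed.

End stopping_times.

Lemma measurable_fun_finite_range_eval (d : measure_display)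
    (T : measurableType d) (R : realType) (Y : R -> T -> R) (s : T -> R) :
  measurable_fun setT s -> finite_set (range s) ->
  (forall t, range s t -> measurable_fun setT (Y t)) ->
  measurable_fun setT (fun w => Y (s w) w).
Proof.
move=> ms fin_s mY _ B mB.
have -> : setT `&` (fun w => Y (s w) w) @^-1` B =
    \bigcup_(t in range s) (s @^-1` [set t] `&` Y t @^-1` B).
  apply/seteqP; split => [w [_ Bw]|w [t _ [/= <- //]]].
  by exists (s w) => //; exists w.
apply: fin_bigcup_measurable => // t st; apply: measurableI.
  by rewrite -[_ @^-1` _]setTI; apply: ms => //; exact: measurable_set1.
by rewrite -[_ @^-1` _]setTI; exact: mY.
Qed.

Section discretization.
Variables (d : measure_display) (T : measurableType d) (R : realType).
Variables (P : probability T R) (Tend : R) (F : R -> set (set T)).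
Hypothesis Tend_gt0 : 0 < Tend.
Hypothesis F_filtration : filtration P Tend F.

Definition discretize (m : nat) (tau : T -> R) (w : T) : R :=
  ceil_step (Tend / m.+1%:R) (tau w).

Let step_gt0 m : 0 < Tend / m.+1%:R.
Proof. by rewrite divr_gt0. Qed.

Let Tend_steps m : Tend = Tend / m.+1%:R * m.+1%:R.
Proof. by rewrite divfK. Qed.

Lemma discretize_ge m tau w : tau w <= discretize m tau w.
Proof. exact: ceil_step_ge. Qed.

Lemma discretize_mem m tau w : 0 <= tau w <= Tend ->
  exists2 k : nat, (k < m.+2)%N & discretize m tau w = Tend / m.+1%:R * k%:R.
Proof. by rewrite {1}(Tend_steps m); exact: ceil_step_mem. Qed.

Lemma discretize_le m tau w : 0 <= tau w <= Tend -> discretize m tau w <= Tend.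
Proof.
move=> /(discretize_mem m)[k km ->].
by rewrite [leRHS](Tend_steps m) ler_pM2l // ler_nat -ltnS.
Qed.

Lemma discretize_cvg tau w : discretize m tau w @[m --> \oo] --> tau w.
Proof.
apply: (@squeeze_cvgr _ _ _ _ (cst (tau w))
  (fun m => tau w + Tend * harmonic m)).
- by apply: nearW => m; rewrite discretize_ge /= ltW // ceil_step_lt.
- exact: cvg_cst.
- rewrite -[X in _ --> X]addr0 -(mulr0 Tend).
  by apply: cvgD; [exact: cvg_cst | apply: cvgMr; exact: cvg_harmonic].
Qed.

Lemma discretize_stopping_time m tau :
  stopping_time Tend F tau -> finite_stopping_time Tend F (discretize m tau).
Proof.
have [[_ F_mono _ _] _] := F_filtration.
move=> [tau_b tau_F]; set a := Tend / m.+1%:R.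
have a_gt0 : 0 < a := step_gt0 m.
split; first split.
- move=> w; have /andP[tau0 _] := tau_b w.
  by rewrite discretize_le // (le_trans tau0) // discretize_ge.
- move=> t /andP[t0 tT].
  set k := Num.floor (t / a).
  have ak0 : 0 <= a * k%:~R.
    by apply: mulr_ge0; [exact: ltW | rewrite ler0z floor_ge0 divr_ge0 // ltW].
  have akt : a * k%:~R <= t by rewrite mulrC -ler_pdivlMr //; exact: floor_le.
  rewrite [X in F t X](_ : _ = [set w | tau w <= a * k%:~R]).
    apply: (F_mono _ _ ak0 akt tT); apply: tau_F.
    by rewrite ak0 (le_trans akt tT).
  by apply/seteqP; split => w /=; rewrite /discretize ceil_step_le.
- apply: (@sub_finite_set _ _ [set a * k%:R | k in `I_(m.+2)]);
    last exact/finite_image/finite_II.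
  by move=> _ [w _ <-]; have [k ? ->] := discretize_mem m (tau_b w); exists k.
Qed.

Variable Y : R -> T -> R.
Hypothesis Y_adapted : adapted Tend F Y.
Hypothesis Y_right_continuous : right_continuous_paths Tend Y.

Lemma measurable_stopped_finite s :
  finite_stopping_time Tend F s -> measurable_fun setT (fun w => Y (s w) w).
Proof.
move=> [s_st s_fin].
apply: (measurable_fun_finite_range_eval
  (stopping_time_measurable F_filtration s_st) s_fin).
move=> _ [w _ <-].
by apply: adapted_measurable F_filtration _ _ Y_adapted _; exact: s_st.1.
Qed.

Lemma stopped_discretize_cvg tau w : 0 <= tau w <= Tend ->
  Y (discretize m tau w) w @[m --> \oo] --> Y (tau w) w.
Proof.
move=> /[dup] tau_b /andP[tau0 tauT].
have [tau_Tend|tau_ltT] := eqVneq (tau w) Tend.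
  apply: cvg_near_cst; apply: nearW => m; congr Y.
  by apply/eqP; rewrite eq_le discretize_ge andbT tau_Tend discretize_le.
apply: (@cvg_at_right_seq _ _ (Y^~ w)); last exact: discretize_cvg.
  by apply: Y_right_continuous; rewrite tau0 lt_neqAle tau_ltT.
by move=> m; exact: discretize_ge.
Qed.

Lemma measurable_stopped tau :
  stopping_time Tend F tau -> measurable_fun setT (fun w => Y (tau w) w).
Proof.
move=> tau_st; have [tau_b _] := tau_st.
apply: (measurable_fun_cvg (h := fun m w => Y (discretize m tau w) w)).
  by move=> m; exact/measurable_stopped_finite/discretize_stopping_time.
by move=> w _; exact: stopped_discretize_cvg.
Qed.

End discretization.

Section risk_measure.
Variables (d : measure_display) (T : measurableType d) (R : realType).
Variables (P : probability T R) (Qs : set (probability T R)).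
Variables (Tend : R) (Y : R -> T -> R).

Lemma Ystar_ge w t :
  bounded_paths Tend Y -> 0 <= t <= Tend -> `|Y t w| <= Ystar Tend Y w.
Proof.
move=> Y_bounded tT; apply: ub_le_sup; last by exists t.
by have [M YM] := Y_bounded w; exists M => _ [s sT <-]; exact: YM.
Qed.

Lemma calX_stopped tau : bounded_paths Tend Y ->
  (forall w, 0 <= tau w <= Tend) ->
  measurable_fun setT (fun w => Y (tau w) w) ->
  calX P Tend Y (fun w => Y (tau w) w).
Proof.
move=> Y_bounded tau_b mY; split => //; exists 1; split => //; apply: aeW => w.
by rewrite mul1r (le_trans (Ystar_ge w Y_bounded (tau_b w))) // lerDl.
Qed.

Lemma Qbar_expect_le Q X1 X2 Z : Qbar P Qs Tend Y Q ->
  calX P Tend Y X1 -> calX P Tend Y X2 -> calX P Tend Y Z ->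
  (forall w, X1 w <= X2 w + Z w) ->
  (expect Q X1 <= expect Q X2 + rhoQ Qs Z)%E.
Proof.
move=> QQ /QQ[iX1 _] /QQ[iX2 _] /QQ[iZ QZ] X12.
apply: (@le_trans _ _ (expect Q X2 + expect Q Z)%E); last exact: leeD2l.
rewrite /expect -integralD //; apply: le_integral => //.
  exact: integrableD.
by move=> w _; rewrite -EFinD lee_fin.
Qed.

Lemma small_rhoQ_majorant (u : nat -> T -> R) (C e : R) :
  cont_from_above_at0 P Qs Tend Y -> 0 < C -> 0 < e ->
  (forall n, measurable_fun setT (u n)) ->
  (forall n w, 0 <= u n w <= C * (Ystar Tend Y w + 1)) ->
  (forall w, u ^~ w @ \oo --> 0) ->
  exists n, exists2 Z, calX P Tend Y Z &
    (forall w, u n w <= Z w) /\ (rhoQ Qs Z <= e%:E)%E.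
Proof.
move=> rho_cont C0 e0 mu u_b u0.
have u_ub w : has_ubound (range (u ^~ w)).
  by exists (C * (Ystar Tend Y w + 1)) => _ [n _ <-]; have /andP[] := u_b n w.
pose Z n w := sups (u ^~ w) n.
have u_Z n w : u n w <= Z n w.
  by apply: ub_le_sup; [exact/has_ubound_sdrop/u_ub | exists n => /=].
have Z_calX n : calX P Tend Y (Z n).
  split; first exact: measurable_fun_sups.
  exists C; split => //; apply: aeW => w.
  have /andP[u0nw _] := u_b n w.
  rewrite ger0_norm; last exact: le_trans u0nw (u_Z n w).
  apply: ge_sup; first by exists (u n w), n => /=.
  by move=> _ [k _ <-]; have /andP[] := u_b k w.
have := rho_cont Z Z_calX (aeW _ (fun w =>
  conj (nonincreasing_sups (u_ub w)) (cvg_sups (u0 w)))).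
move=> /fine_cvgP[rho_fin rho_cvg].
have [n [Zn_fin Zn_lt]] :=
  filter_ex (filterI rho_fin (cvgr_dist_lt _ _ rho_cvg _ e0)).
exists n, (Z n) => //; split => //.
rewrite -(fineK Zn_fin) lee_fin; move: Zn_lt; rewrite sub0r normrN => Zn_lt.
exact: le_trans (ler_norm _) (ltW Zn_lt).
Qed.

End risk_measure.

Lemma stopped_finite_approx (d : measure_display) (T : measurableType d)
    (R : realType) (P : probability T R) (Tend : R) (F : R -> set (set T))
    (Qs : set (probability T R)) (Y : R -> T -> R) (tau : T -> R) (e : R) :
  0 < Tend -> filtration P Tend F -> adapted Tend F Y ->
  right_continuous_paths Tend Y -> bounded_paths Tend Y ->
  cont_from_above_at0 P Qs Tend Y -> stopping_time Tend F tau -> 0 < e ->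
  exists2 s, finite_stopping_time Tend F s &
    forall Q, Qbar P Qs Tend Y Q ->
      (expect Q (fun w => Y (tau w) w) <=
       expect Q (fun w => Y (s w) w) + e%:E)%E.
Proof.
move=> Tend0 F_filt Y_ad Y_rc Y_bd rho_cont tau_st e0.
have [tau_b _] := tau_st.
have disc_st m := discretize_stopping_time Tend0 F_filt m tau_st.
have mY_tau := measurable_stopped Tend0 F_filt Y_ad Y_rc tau_st.
have mY_disc m := measurable_stopped_finite F_filt Y_ad (disc_st m).
pose u m w := `|Y (tau w) w - Y (discretize Tend m tau w) w|.
have [n [Z Z_calX [u_Z rhoZ]]] : exists n, exists2 Z, calX P Tend Y Z &
    (forall w, u n w <= Z w) /\ (rhoQ Qs Z <= e%:E)%E.
  apply: (small_rhoQ_majorant (C := 2)) => // [m|m w|w].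
  - by apply: measurableT_comp => //; exact: measurable_funB.
  - have [[disc_b _] _] := disc_st m.
    have := ler_normB (Y (tau w) w) (Y (discretize Tend m tau w) w).
    have := Ystar_ge w Y_bd (tau_b w); have := Ystar_ge w Y_bd (disc_b w).
    rewrite /u normr_ge0 /=; lra.
  - have Y_disc_cvg := stopped_discretize_cvg Tend0 Y_rc (tau_b w).
    apply/cvgr0Pnorm_lt => r r0.
    apply: filterS (cvgr_dist_lt _ _ Y_disc_cvg _ r0) => m.
    by rewrite /u normr_id.
exists (discretize Tend n tau) => // Q QQ.
apply: le_trans (leeD2l _ rhoZ); apply: (Qbar_expect_le QQ) Z_calX _.
- exact: calX_stopped Y_bd tau_b mY_tau.
- exact: calX_stopped Y_bd (disc_st n).1.1 (mY_disc n).
- by move=> w; rewrite -lerBlDl (le_trans (ler_norm _) (u_Z w)).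
Qed.

Theorem lemma6p6 (d : measure_display) (T : measurableType d) (R : realType)
  (P : probability T R) (Tend : R) (F : R -> set (set T))
  (Qs : set (probability T R)) (Y : R -> T -> R) :
  0 < Tend ->
  filtration P Tend F ->
  Qs !=set0 ->
  (forall Q, Qs Q -> Q `<< P) ->
  adapted Tend F Y ->
  right_continuous_paths Tend Y ->
  bounded_paths Tend Y ->
  quasi_left_usc P Tend F Y ->
  L1Q Qs (Ystar Tend Y) ->
  cont_from_above_at0 P Qs Tend Y ->
  ereal_sup [set ereal_inf [set expect Q (fun w => Y (tau w) w)
                           | Q in Qbar P Qs Tend Y]
            | tau in stopping_time Tend F]
  = ereal_sup [set ereal_inf [set expect Q (fun w => Y (tau w) w)
                             | Q in Qbar P Qs Tend Y]
              | tau in finite_stopping_time Tend F]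
  /\
  ereal_inf [set ereal_sup [set expect Q (fun w => Y (tau w) w)
                           | tau in stopping_time Tend F]
            | Q in Qbar P Qs Tend Y]
  = ereal_inf [set ereal_sup [set expect Q (fun w => Y (tau w) w)
                             | tau in finite_stopping_time Tend F]
              | Q in Qbar P Qs Tend Y].
Proof.
move=> Tend0 F_filt _ _ Y_ad Y_rc Y_bd _ _ rho_cont.
have fin_st : finite_stopping_time Tend F `<=` stopping_time Tend F.
  by move=> s [].
have approx tau e := @stopped_finite_approx d T R P Tend F Qs Y tau e
  Tend0 F_filt Y_ad Y_rc Y_bd rho_cont.
split; [exact: ereal_sup_inf_approx fin_st approx
       | exact: ereal_inf_sup_approx fin_st approx].
Qed.
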